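(* Let $(X,d_X,\mu_X)$ be a finite metric measure space, $X=\{x_1,\dots,x_n\}$, with $\mu_X(x_i)>0$ for all $i$, and let $1\le k\le n$. Then for all $i,j$, \[ E_{X,k}(x_i,x_j)=|d_X(x_i,x_j)-[\Phi_k(x_i),\Phi_k(x_j)]|\le\frac{|\lambda_{k+1}|}{\sqrt{\mu_X(x_i)\mu_X(x_j)}}. \]
   Context: The distance kernel operator of the finite space is the matrix $D_{ij}=d_X(x_i,x_j)\mu_X(x_j)$, self-adjoint for the inner product $\langle v,w\rangle_Q=\sum_i v_iw_i\mu_X(x_i)$. It has real eigenvalues $\lambda_1,\dots,\lambda_n$ ordered by decreasing absolute value (assumed of multiplicity one) and a $Q$-orthonormal basis of real eigenvectors $e_1,\dots,e_n$; set $\lambda_{n+1}:=0$. The distance kernel embedding is $\Phi_k(x_j)=(\sqrt{\lambda_1}(e_1)_j,\dots,\sqrt{\lambda_k}(e_k)_j)\in\mathbb{C}^k$, the square root of a negative number taken with positive imaginary part. For $v,w\in\mathbb{C}^k$, $[v,w]=\sum_{l=1}^k v_lw_l$. *)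

From HB Require Import structures.
From mathcomp Require Import all_boot all_order all_algebra.
From mathcomp Require Import complex.
Set Implicit Arguments. Unset Strict Implicit. Unset Printing Implicit Defensive.
Import Order.TTheory GRing.Theory Num.Theory.
Local Open Scope ring_scope.

Section DistKernel.
Variable R : rcfType.
Variable n : nat.

Definition is_metric (d : 'I_n -> 'I_n -> R) : Prop :=
  [/\ forall i, d i i = 0,
      forall i j, i != j -> 0 < d i j,
      forall i j, d i j = d j i &
      forall i j l, d i l <= d i j + d j l].

Definition dist_kernel (d : 'I_n -> 'I_n -> R) (mu : 'I_n -> R) : 'M[R]_n :=
  \matrix_(i, j) (d i j * mu j).

Definition Qdot (mu : 'I_n -> R) (v w : 'cV[R]_n) : R :=
  \sum_i v i 0 * w i 0 * mu i.

(* lambda_{m+1} in 1-based notation = lam_ext m ; lambda_{n+1} := 0 *)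
Definition lam_ext (lam : 'I_n -> R) (m : nat) : R :=
  match @insub nat (fun m => m < n)%N _ m with
  | Some i => lam i
  | None => 0
  end.
End DistKernel.

Definition csqrt (R : rcfType) (x : R) : R[i] :=
  if 0 <= x then Complex (Num.sqrt x) 0 else Complex 0 (Num.sqrt (- x)).

(* distance kernel embedding Phi_k(x_j) in C^k; the eigenvectors e_l are the
   columns of E, (e_l)_j = E j l *)
Definition Phi (R : rcfType) (n k : nat) (hk : (k <= n)%N)
  (lam : 'I_n -> R) (E : 'M[R]_n) (j : 'I_n) : 'rV[R[i]]_k :=
  \row_(l < k) (csqrt (lam (widen_ord hk l)) * Complex (E j (widen_ord hk l)) 0).

(* [v,w] = sum_l v_l w_l (bilinear, no conjugation) *)
Definition cbracket (R : rcfType) (k : nat) (v w : 'rV[R[i]]_k) : R[i] :=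
  \sum_(l < k) v 0 l * w 0 l.

From HB Require Import structures.
From mathcomp Require Import all_boot all_order all_algebra.
From mathcomp Require Import complex.
From mathcomp Require Import ring lra.
Import Order.TTheory GRing.Theory Num.Theory.
Local Open Scope ring_scope.

(* The Q-orthonormality of the eigenvectors says E^T diag(mu) E = 1; as E is
   square this gives E E^T diag(mu) = 1 as well, so D = E diag(lam) E^T diag(mu)
   and d(x_i, x_j) = sum_l lam_l (e_l)_i (e_l)_j.  The bracket of the embedding
   is the same sum truncated at k, so the error is the tail sum over l >= k,
   whose eigenvalues are bounded by |lam_(k+1)|.  Finally, Q-orthonormality of
   the rows and AM-GM give sum_l |(e_l)_i (e_l)_j| <= 1 / sqrt(mu_i mu_j). *)

Lemma csqrt_sq (R : rcfType) (x : R) : csqrt x * csqrt x = (x%:C)%C.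
Proof.
rewrite /csqrt; case: ifP => hx; rewrite /GRing.mul /=.
  by rewrite -expr2 sqr_sqrtr // !mul0r mulr0 subr0 addr0.
rewrite !mul0r mulr0 -expr2 sqr_sqrtr ?opprK ?sub0r ?addr0 ?add0r //.
by rewrite oppr_ge0 ltW // ltNge hx.
Qed.

Lemma normc_real (R : rcfType) (x : R) :
  ComplexField.Normc.normc (x%:C)%C = `|x|.
Proof. by rewrite /= expr0n /= addr0 sqrtr_sqr. Qed.

Lemma sqrtrM_norm_le_mean (R : rcfType) (x y a b : R) : 0 <= x -> 0 <= y ->
  Num.sqrt x * Num.sqrt y * `|a * b| <= (a * a * x + b * b * y) / 2.
Proof.
move=> x_ge0 y_ge0.
have -> : Num.sqrt x * Num.sqrt y * `|a * b|
          = (`|a| * Num.sqrt x) * (`|b| * Num.sqrt y).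
  by rewrite normrM; ring.
have sqr_norm_sqrt (c z : R) : 0 <= z -> (`|c| * Num.sqrt z) ^+ 2 = c * c * z.
  by move=> z_ge0; rewrite exprMn sqr_sqrtr // real_normK ?num_real // expr2.
by rewrite -(sqr_norm_sqrt a x) // -(sqr_norm_sqrt b y) // leif_mean_square.
Qed.

Section QOrthonormalBasis.
Context {R : rcfType} {n : nat} {mu : 'I_n -> R} {E : 'M[R]_n}.
Hypothesis mu_gt0 : forall i, 0 < mu i.
Hypothesis E_Qorthonormal :
  forall l m : 'I_n, Qdot mu (col l E) (col m E) = (l == m)%:R.

Let M : 'M[R]_n := diag_mx (\row_i mu i).

Lemma Qorthonormal_mxE : E^T *m M *m E = 1%:M.
Proof.
apply/matrixP => l m; rewrite !mxE /M mul_mx_diag -E_Qorthonormal /Qdot.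
by apply: eq_bigr => p _; rewrite !mxE mulrAC.
Qed.

Lemma Qorthonormal_rows (i j : 'I_n) :
  \sum_l E i l * E j l * mu j = (i == j)%:R.
Proof.
have /matrixP/(_ i j) := mulmx1C Qorthonormal_mxE; rewrite !mxE => <-.
by apply: eq_bigr => l _; rewrite /M mul_mx_diag !mxE mulrA.
Qed.

Lemma sum_norm_rows_le (i j : 'I_n) :
  (\sum_l `|E i l * E j l|) * Num.sqrt (mu i * mu j) <= 1.
Proof.
have mean_le l : `|E i l * E j l| * Num.sqrt (mu i * mu j)
    <= (E i l * E i l * mu i + E j l * E j l * mu j) / 2.
  rewrite mulrC (sqrtrM _ (ltW (mu_gt0 i))).
  exact: sqrtrM_norm_le_mean (ltW (mu_gt0 i)) (ltW (mu_gt0 j)).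
rewrite mulr_suml; apply: le_trans (ler_sum _ (fun l _ => mean_le l)) _.
by rewrite -mulr_suml big_split /= !Qorthonormal_rows !eqxx /=; lra.
Qed.

Context {d : 'I_n -> 'I_n -> R} {lam : 'I_n -> R}.
Hypothesis E_eigen :
  forall l : 'I_n, dist_kernel d mu *m col l E = lam l *: col l E.

Lemma dist_kernel_mx_eigen : dist_kernel d mu *m E = E *m diag_mx (\row_l lam l).
Proof.
apply/matrixP => i l; rewrite mul_mx_diag !mxE mulrC.
have /matrixP/(_ i 0) := E_eigen l; rewrite !mxE => <-.
by apply: eq_bigr => p _; rewrite !mxE.
Qed.

Lemma dist_spectral (i j : 'I_n) : d i j = \sum_l lam l * (E i l * E j l).
Proof.
have : (dist_kernel d mu *m (E *m (E^T *m M))) i j = dist_kernel d mu i j.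
  by rewrite (mulmx1C Qorthonormal_mxE) mulmx1.
rewrite mulmxA dist_kernel_mx_eigen -mulmxA mulmxA !mul_mx_diag !mxE => dij.
apply: (mulIf (lt0r_neq0 (mu_gt0 j))); rewrite -dij mulr_suml.
by apply: eq_bigr => l _; rewrite !mxE; ring.
Qed.

Lemma spectral_partial_sum_le (P : pred 'I_n) (L : R) (i j : 'I_n) :
  0 <= L -> (forall l, P l -> `|lam l| <= L) ->
  `|\sum_(l | P l) lam l * (E i l * E j l)| <= L / Num.sqrt (mu i * mu j).
Proof.
move=> L_ge0 lam_le.
have sqrt_gt0 : 0 < Num.sqrt (mu i * mu j) by rewrite sqrtr_gt0 mulr_gt0.
apply: le_trans (ler_norm_sum _ _ _) _.
apply: (@le_trans _ _ (L * \sum_(l | P l) `|E i l * E j l|)).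
  by rewrite mulr_sumr; apply: ler_sum => l Pl; rewrite normrM ler_wpM2r ?lam_le.
apply: (@le_trans _ _ (L * \sum_l `|E i l * E j l|)).
  by rewrite ler_wpM2l // [leRHS](bigID P) /= lerDl sumr_ge0.
rewrite ler_pdivlMr // -mulrA -[leRHS]mulr1 ler_wpM2l //.
exact: sum_norm_rows_le.
Qed.

End QOrthonormalBasis.

Lemma cbracket_Phi (R : rcfType) (n k : nat) (hk : (k <= n)%N)
    (lam : 'I_n -> R) (E : 'M[R]_n) (i j : 'I_n) :
  cbracket (Phi hk lam E i) (Phi hk lam E j) =
  ((\sum_(l < k) lam (widen_ord hk l) *
     (E i (widen_ord hk l) * E j (widen_ord hk l)))%:C)%C.
Proof.
rewrite /cbracket rmorph_sum; apply: eq_bigr => l _; rewrite !mxE !complexr0.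
by rewrite mulrACA csqrt_sq -!rmorphM.
Qed.

Lemma lam_ext_tail_le {R : rcfType} {n : nat} (k : nat) {lam : 'I_n -> R} :
  (forall l m : 'I_n, (l <= m)%N -> `|lam m| <= `|lam l|) ->
  forall l : 'I_n, ~~ (l < k)%N -> `|lam l| <= `|lam_ext lam k|.
Proof.
move=> lam_nonincr l; rewrite -leqNgt /lam_ext => le_kl.
case: insubP => [m _ val_m | ]; first by apply: lam_nonincr; rewrite val_m.
by rewrite -leqNgt => le_nk; have := ltn_ord l; rewrite ltnNge (leq_trans le_nk).
Qed.

Theorem proposition6p14 (R : rcfType) (n : nat)
  (d : 'I_n -> 'I_n -> R) (mu : 'I_n -> R)
  (lam : 'I_n -> R) (E : 'M[R]_n) (k : nat)
  (hd : is_metric d)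
  (hmu : forall i, 0 < mu i)
  (heig : forall l : 'I_n, dist_kernel d mu *m col l E = lam l *: col l E)
  (horth : forall l m : 'I_n, Qdot mu (col l E) (col m E) = (l == m)%:R)
  (hord : forall l m : 'I_n, (l <= m)%N -> `|lam m| <= `|lam l|)
  (hsimple : injective lam)
  (hk1 : (1 <= k)%N) (hk : (k <= n)%N) :
  forall i j : 'I_n,
    ComplexField.Normc.normc (Complex (d i j) 0 - cbracket (Phi hk lam E i) (Phi hk lam E j))
      <= `|lam_ext lam k| / Num.sqrt (mu i * mu j).
Proof.
move=> i j.
rewrite cbracket_Phi complexr0 -rmorphB normc_real (dist_spectral hmu horth heig).
rewrite (bigID (fun l : 'I_n => (l < k)%N)) /= (big_ord_narrow hk) addrAC subrr add0r.
apply: (spectral_partial_sum_le hmu horth (fun l : 'I_n => ~~ (l < k)%N)) => //.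
exact: lam_ext_tail_le.
Qed.
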